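(* Let $A\in\mathbb C^{n\times n}$, $b\in\mathbb C^n$, and let $M, F\in\mathbb C^{n\times n}$ be nonsingular. Partition the index set $\{1,\dots,n\}$ into $m$ consecutive blocks, and write accordingly $x = (x^{(1)},\dots,x^{(m)})$, $b=(b^{(1)},\dots,b^{(m)})$, and $A = (A^{(s,q)})_{s,q=1}^m$ in block form; assume $M$ and $F$ are block diagonal with respect to this partition, with nonsingular diagonal blocks $M^{(1)},\dots,M^{(m)}$ and $F^{(1)},\dots,F^{(m)}$. Let $I$ be the $n\times n$ identity and \[ Q := \begin{bmatrix} 0 & I - M^{-1}A \\ I - F^{-1}A & 0 \end{bmatrix}. \] Consider any sequence of subsets $\Omega_k\subseteq\{1,\dots,m\}$, $k\in\mathbb N$, such that each $s\in\{1,\dots,m\}$ belongs to $\Omega_k$ for infinitely many $k$, and any functions $\delta_s(q,k)\in\mathbb N$ ($s,q\in\{1,\dots,m\}$, $k\in\mathbb N$) with $\delta_s(q,k)\le k$ and $\lim_{k\to\infty}\delta_s(q,k)=\infty$ for all $s,q$. Given an arbitrary initial vector $x^0$, define the asynchronous alternating iteration: for each $k\in\mathbb N$ and all $s\in\{1,\dots,m\}$, \[ y^{(s),k} := x^{(s),\delta_s(s,k)} + {M^{(s)}}^{-1}\Big(b^{(s)} - \sum_{q=1}^m A^{(s,q)} x^{(q),\delta_s(q,k)}\Big), \] \[ x^{(s),k+1} := \begin{cases} y^{(s),\delta_s(s,k)} + {F^{(s)}}^{-1}\Big(b^{(s)} - \displaystyle\sum_{q=1}^m A^{(s,q)} y^{(q),\delta_s(q,k)}\Big)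 & \text{if } s\in\Omega_k,\\[1ex] x^{(s),k} & \text{if } s\notin\Omega_k.\end{cases} \] If $\rho(|Q|)<1$, then for every initial guess $x^0$, every such sequence $\{\Omega_k\}$ and every such delay functions $\delta_1,\dots,\delta_m$, the sequence $x^k$ converges to the solution of $Ax=b$.
   Context: For a matrix $\mathcal A$, $|\mathcal A|$ denotes the entrywise absolute value (modulus) and $\rho(\mathcal A)$ denotes its spectral radius. *)

From HB Require Import structures.
From mathcomp Require Import all_boot all_order all_algebra.
From mathcomp Require Import complex.
From mathcomp Require Import classical_sets reals.
Set Implicit Arguments. Unset Strict Implicit. Unset Printing Implicit Defensive.
Import Order.TTheory GRing.Theory Num.Theory.
Local Open Scope ring_scope.
Local Open Scope complex_scope.

Definition spectral_radius (R : realType) (N : nat) (B : 'M[R[i]]_N) : R :=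
  sup [set Normc.normc l | l in [set l | eigenvalue B l]]%classic.

Definition mx_abs (R : realType) (N1 N2 : nat) (B : 'M[R[i]]_(N1, N2)) : 'M[R[i]]_(N1, N2) :=
  map_mx (fun z => `|z|) B.

Definition vblk (T : Type) (m : nat) (p : 'I_m -> nat)
  (x : 'cV[T]_(\sum_(i < m) p i)) (s : 'I_m) : 'cV[T]_(p s) :=
  @submxcol T m p 1 x s.

Definition mblk (T : Type) (m : nat) (p : 'I_m -> nat)
  (A : 'M[T]_(\sum_(i < m) p i)) (s q : 'I_m) : 'M[T]_(p s, p q) :=
  @submxblock T m m p p A s q.

Definition cvg_to (R : realType) (N : nat) (x : nat -> 'cV[R[i]]_N) (l : 'cV[R[i]]_N) : Prop :=
  forall e : R, 0 < e -> exists K : nat, forall k : nat, (K <= k)%N ->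
    forall j : 'I_N, Normc.normc (x k j 0 - l j 0) < e.

(* Since rho(|Q|) < 1, the powers of |Q| tend to 0 (by Cayley-Hamilton, each
   linear factor B - l of the characteristic polynomial contributes a scalar
   recurrence with |l| < 1), so for K large u := sum_(k <= K) |Q|^k 1 is a
   positive vector with |Q| u <= th u for some th < 1.  Splitting u = (w, v)
   along the two block rows of Q gives |I - M^-1 A| v <= th w and
   |I - F^-1 A| w <= th v: each half-step of the iteration contracts the
   weighted max-norms given by w and v.  Hence a bound |x^k - xs| <= c v that
   holds from some time on improves to c th^2 v once all delays have passed
   that time and every block has been updated since, which forces convergence.
   The same contraction shows that Q has no nonzero fixed point, and a solution
   z of A z = 0 would give the fixed point (z, z); so A is nonsingular. *)

From mathcomp Require Import all_boot all_order all_algebra.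
From mathcomp Require Import complex.
From mathcomp Require Import classical_sets reals.
From mathcomp Require Import ring lra.
Set Implicit Arguments.
Unset Strict Implicit.
Unset Printing Implicit Defensive.

Import Order.TTheory GRing.Theory Num.Theory.
Local Open Scope ring_scope.

Section Convergence.
Variable R : realType.
Local Open Scope complex_scope.
Local Notation C := R[i].
Local Notation normc := (@Normc.normc R).

Lemma bernoulli (t : nat) (h : R) : 0 <= h -> 1 + t%:R * h <= (1 + h) ^+ t.
Proof.
move=> h0; elim: t => [|t IH]; first by rewrite mul0r addr0 expr0.
have X1 : 1 <= (1 + h) ^+ t by apply: exprn_ege1; lra.
have t0 : 0 <= t%:R :> R := ler0n _ t.
rewrite exprSr -natr1; nra.
Qed.

Lemma exists_expr_lt (r e : R) : 0 <= r -> r < 1 -> 0 < e ->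
  exists t : nat, r ^+ t < e.
Proof.
move=> r0 r1 e0; have [->|r_neq0] := eqVneq r 0; first by exists 1%N; rewrite expr1.
have r_gt0 : 0 < r by rewrite lt_def r_neq0.
pose h := r^-1 - 1; have h_gt0 : 0 < h by rewrite subr_gt0 invf_gt1.
have [t ht] : exists t : nat, (e * h)^-1 < t%:R.
  by exists (Num.bound (e * h)^-1); rewrite archi_boundP // invr_ge0 ltW ?mulr_gt0.
exists t; have -> : r ^+ t = ((1 + h) ^+ t)^-1 by rewrite addrC subrK exprVn invrK.
have X_gt0 : 0 < (1 + h) ^+ t by rewrite exprn_gt0 // addr_gt0.
rewrite invf_plt // (lt_le_trans _ (bernoulli t (ltW h_gt0))) // ltr_wpDl //.
by rewrite -ltr_pdivrMr // -invfM.
Qed.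

Lemma eventually_lt_of_geometric (f : nat -> R) (c r : R) : 0 <= r -> r < 1 ->
  (forall t, exists K, forall k, (K <= k)%N -> f k <= c * r ^+ t) ->
  forall e, 0 < e -> exists K, forall k, (K <= k)%N -> f k < e.
Proof.
move=> r0 r1 hf e e0.
have c1_gt0 : 0 < `|c| + 1 by rewrite ltr_wpDl.
have [t] := exists_expr_lt r0 r1 (divr_gt0 e0 c1_gt0).
rewrite ltr_pdivlMr // => ht.
have [K hK] := hf t; exists K => k /hK fk.
have rt0 : 0 <= r ^+ t := exprn_ge0 t r0.
have := ler_norm c; nra.
Qed.

Lemma eventually_forall (I : finType) (P : I -> nat -> Prop) :
  (forall i, exists K, forall k, (K <= k)%N -> P i k) ->
  exists K, forall k, (K <= k)%N -> forall i, P i k.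
Proof.
move=> hP.
suff [K hK] : exists K, forall i, i \in enum I -> forall k, (K <= k)%N -> P i k.
  by exists K => k hk i; apply: hK; rewrite ?mem_enum.
elim: (enum I) => [|i s [K1 hK1]]; first by exists 0%N.
have [K2 hK2] := hP i; exists (maxn K1 K2) => j; rewrite in_cons.
case/orP=> [/eqP->|hj] k; rewrite geq_max => /andP[hk1 hk2]; first exact: hK2.
exact: hK1.
Qed.

Lemma normc_ge0 (z : C) : 0 <= normc z.
Proof. by case: z => a b; apply: sqrtr_ge0. Qed.

Lemma normc_real (r : R) : normc r%:C = `|r|.
Proof. by rewrite /= expr0n /= addr0 sqrtr_sqr. Qed.

Lemma normc_sum_le (I : Type) (r : seq I) (P : pred I) (F : I -> C) :
  normc (\sum_(i <- r | P i) F i) <= \sum_(i <- r | P i) normc (F i).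
Proof.
apply: (big_ind2 (fun a b => normc a <= b)) => //; first by rewrite Normc.normc0.
by move=> x1 y1 x2 y2 h1 h2; apply: le_trans (le_normcD _ _) (lerD h1 h2).
Qed.

Definition vanishing (a : nat -> C) :=
  forall e, 0 < e -> exists K, forall k, (K <= k)%N -> normc (a k) < e.

Lemma vanishing_recurrence (z : C) (a c : nat -> C) : normc z < 1 ->
  (forall k, a k.+1 = z * a k + c k) -> vanishing c -> vanishing a.
Proof.
move=> z1 rec c0 e e0; set r := normc z; have r0 : 0 <= r := normc_ge0 z.
have eta_gt0 : 0 < e * (1 - r) / 2 by rewrite divr_gt0 ?mulr_gt0 ?subr_gt0.
have [K0 hK0] := c0 _ eta_gt0.
have bound t : normc (a (K0 + t)%N) <= r ^+ t * normc (a K0) + e / 2.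
  elim: t => [|t IH]; first by rewrite addn0 expr0 mul1r lerDl; lra.
  rewrite addnS rec; have hc := hK0 (K0 + t)%N (leq_addr _ _).
  apply: le_trans (le_normcD _ _) _; rewrite Normc.normcM exprS -mulrA.
  have := ler_wpM2l r0 IH; rewrite -/r; lra.
have hf t : exists K, forall k, (K <= k)%N ->
    normc (a k) - e / 2 <= normc (a K0) * r ^+ t.
  exists (K0 + t)%N => k hk; have K0k := leq_trans (leq_addr t K0) hk.
  have := bound (k - K0)%N; rewrite subnKC //.
  have : r ^+ (k - K0) <= r ^+ t.
    by apply: ler_wiXn2l; rewrite ?(ltW z1) ?leq_subRL.
  have := normc_ge0 (a K0); nra.
have e2_gt0 : 0 < e / 2 by lra.
have [K hK] := eventually_lt_of_geometric r0 z1 hf e2_gt0.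
by exists K => k /hK; lra.
Qed.

Lemma normc_le_spectral_radius (N : nat) (B : 'M[C]_N) (l : C) :
  eigenvalue B l -> normc l <= spectral_radius B.
Proof.
move=> hl; apply: ub_le_sup; last by exists l.
have [rs hrs] := closed_field_poly_normal (char_poly B).
rewrite (monicP (char_poly_monic B)) scale1r in hrs.
exists (\sum_(w <- rs) normc w) => _ [l' + <-].
rewrite /= eigenvalue_root_char hrs root_prod_XsubC => l'_rs.
by rewrite (big_rem _ l'_rs) /= lerDl sumr_ge0 // => w _; apply: normc_ge0.
Qed.

Lemma vanishing_mxpow_mul (N : nat) (B U : 'M[C]_N.+1) (s : seq C) :
  (forall z, z \in s -> normc z < 1) -> \prod_(z <- s) (B - z%:M) * U = 0 ->
  forall i j, vanishing (fun k => (B ^+ k * U) i j).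
Proof.
(* Peeling off the last factor B - z makes the entries of B^k U a scalar
   recurrence in z whose forcing term vanishes by induction. *)
elim/last_ind: s U => [|s z IH] U s_lt1 hU i j.
  rewrite big_nil mul1r in hU; rewrite hU => e e0.
  by exists 0%N => k _; rewrite mulr0 mxE Normc.normc0.
rewrite big_rcons /= -mulrA in hU.
apply: (@vanishing_recurrence z _ (fun k => (B ^+ k * ((B - z%:M) * U)) i j)).
- by apply: s_lt1; rewrite mem_rcons mem_head.
- move=> k; rewrite mulrBl mulrBr mulrA -exprSr -[z%:M * U]/(z%:M *m U).
  by rewrite mul_scalar_mx -scalerAr !mxE [RHS]addrC subrK.
- by apply: IH => // w hw; apply: s_lt1; rewrite mem_rcons in_cons hw orbT.
Qed.

Lemma vanishing_mxpow (N : nat) (B : 'M[C]_N.+1) :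
  (forall l, eigenvalue B l -> normc l < 1) ->
  forall i j, vanishing (fun k => (B ^+ k) i j).
Proof.
move=> B_lt1 i j; have [rs hrs] := closed_field_poly_normal (char_poly B).
rewrite (monicP (char_poly_monic B)) scale1r in hrs.
have CH : \prod_(z <- rs) (B - z%:M) * 1 = 0.
  rewrite mulr1 -(Cayley_Hamilton B) hrs rmorph_prod; apply: eq_bigr => z _.
  by rewrite rmorphB /= horner_mx_X horner_mx_C.
have rs_lt1 z : z \in rs -> normc z < 1.
  by move=> hz; apply: B_lt1; rewrite eigenvalue_root_char hrs root_prod_XsubC.
move=> e /(vanishing_mxpow_mul rs_lt1 CH i j) [K hK].
by exists K => k /hK; rewrite mulr1.
Qed.

Lemma mulmx_sum_powers (N : nat) (P : 'M[R]_N.+1) (u : 'cV[R]_N.+1) (K : nat) :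
  let S := \sum_(k < K.+1) P ^+ k *m u in P *m S + u = S + P ^+ K.+1 *m u.
Proof.
rewrite /= {2}big_ord_recl mulmx_sumr big_ord_recr /= expr0 mul1mx.
under eq_bigr do rewrite mulmxA mulmxE -exprS.
by rewrite mulmxA mulmxE -exprS [LHS]addrC addrA.
Qed.

Lemma nonneg_mx_weight (N : nat) (P : 'M[R]_N.+1) (K : nat) :
  (forall i j, 0 <= P i j) -> (forall i j, (P ^+ K.+1) i j <= (2 * N.+1%:R)^-1) ->
  exists (u : 'I_N.+1 -> R) (th : R), [/\ 0 <= th, th < 1, forall i, 0 < u i &
    forall i, \sum_j P i j * u j <= th * u i].
Proof.
(* u := sum_(k <= K) P^k 1 satisfies P u = u - 1 + P^(K+1) 1 <= u - 1/2. *)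
move=> P_ge0 PK_small; pose one : 'cV[R]_N.+1 := const_mx 1.
have Pk_ge0 k i j : 0 <= (P ^+ k) i j.
  elim: k i j => [|k IH] i j; first by rewrite expr0 mxE ler0n.
  by rewrite exprS -mulmxE mxE sumr_ge0 // => l _; rewrite mulr_ge0.
have Pk1_ge0 k i : 0 <= (P ^+ k *m one) i 0.
  by rewrite mxE sumr_ge0 // => j _; rewrite mxE mulr1.
pose U := \sum_(k < K.+1) P ^+ k *m one; pose u i := U i 0.
have u_ge1 i : 1 <= u i.
  rewrite /u /U big_ord_recl mxE expr0 mul1mx mxE lerDl summxE.
  by apply: sumr_ge0 => k _; apply: Pk1_ge0.
have PK1_le i : (P ^+ K.+1 *m one) i 0 <= 1 / 2.
  rewrite mxE (@le_trans _ _ (\sum_(j < N.+1) (2 * N.+1%:R)^-1)) //.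
    by apply: ler_sum => j _; rewrite mxE mulr1.
  by rewrite sumr_const card_ord -[_ *+ N.+1]mulr_natr invfM mulrAC mulfK ?pnatr_eq0 // mul1r.
pose S := \sum_i u i.
have u_leS i : u i <= S.
  by rewrite /S (bigD1 i) //= lerDl sumr_ge0 // => j _; apply: le_trans (u_ge1 j).
have S_ge1 : 1 <= S := le_trans (u_ge1 ord0) (u_leS ord0).
have S2_gt0 : 0 < 2 * S by lra.
exists u, (1 - (2 * S)^-1); split => [||i|i].
- by rewrite subr_ge0 invf_le1 //; lra.
- by rewrite ltrBlDl ltrDr invr_gt0.
- by apply: lt_le_trans (u_ge1 i).
have -> : \sum_j P i j * u j = u i - 1 + (P ^+ K.+1 *m one) i 0.
  have /matrixP/(_ i 0) := mulmx_sum_powers P one K; rewrite !mxE.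
  by move=> /(canRL (addrK _)) ->; rewrite addrAC.
have := PK1_le i; have := u_leS i; have := u_ge1 i.
have : (2 * S)^-1 * (2 * S) = 1 by rewrite mulVf // gt_eqF.
nra.
Qed.

Lemma weight_of_spectral_radius_lt1 (N : nat) (B : 'M[C]_N) :
  spectral_radius (mx_abs B) < 1 ->
  exists (u : 'I_N -> R) (th : R), [/\ 0 <= th, th < 1, forall i, 0 < u i &
    forall i, \sum_j normc (B i j) * u j <= th * u i].
Proof.
case: N B => [|N] B hB; first by exists (fun _ => 1), 0; split=> // -[].
pose P : 'M[R]_N.+1 := map_mx normc B.
have absX k : mx_abs B ^+ k = map_mx (real_complex R) (P ^+ k).
  elim: k => [|k IH]; first by rewrite !expr0 map_mx1.
  rewrite !exprS IH -[_ * _]/(_ *m _) map_mxM; congr (_ *m _).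
  by apply/matrixP => i j; rewrite !mxE.
have [K PK_small] : exists K, forall i j, (P ^+ K.+1) i j <= (2 * N.+1%:R)^-1.
  have c_gt0 : 0 < (2 * N.+1%:R)^-1 :> R by rewrite invr_gt0 mulr_gt0.
  have ev_lt1 l : eigenvalue (mx_abs B) l -> normc l < 1.
    by move=> hl; apply: le_lt_trans (normc_le_spectral_radius hl) hB.
  have [K hK] := @eventually_forall _
    (fun ij k => normc ((mx_abs B ^+ k) ij.1 ij.2) < (2 * N.+1%:R)^-1)
    (fun ij => vanishing_mxpow ev_lt1 ij.1 ij.2 c_gt0).
  exists K => i j; have := hK K.+1 (leqnSn K) (i, j).
  rewrite /= absX mxE normc_real => /ltW; exact: le_trans (ler_norm _).
have P_ge0 i j : 0 <= P i j by rewrite mxE normc_ge0.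
have [u [th [th0 th1 u_gt0 hu]]] := nonneg_mx_weight P_ge0 PK_small.
by exists u, th; split=> // i; have := hu i; under eq_bigr do rewrite mxE.
Qed.

Lemma antidiag_weight_split (n : nat) (G H : 'M[C]_n) (u : 'I_(n + n) -> R) (th : R) :
  (forall i, \sum_j normc (block_mx 0 G H 0 i j) * u j <= th * u i) ->
  (forall i, \sum_j normc (G i j) * u (rshift n j) <= th * u (lshift n i)) /\
  (forall i, \sum_j normc (H i j) * u (lshift n j) <= th * u (rshift n i)).
Proof.
move=> hu; split=> i; [have := hu (lshift n i) | have := hu (rshift n i)];
  rewrite big_split_ord /=.
- rewrite big1 ?add0r => [|j _]; last by rewrite block_mxEul mxE Normc.normc0 mul0r.
  by under eq_bigr do rewrite block_mxEur.
- rewrite [X in _ + X]big1 ?addr0 => [|j _]; last by rewrite block_mxEdr mxE Normc.normc0 mul0r.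
  by under eq_bigr do rewrite block_mxEdl.
Qed.

Lemma normc_row_mul_le (n : nat) (X : 'M[C]_n) (a b : 'I_n -> R) (th c : R)
    (f : 'I_n -> C) (i : 'I_n) :
  0 <= c -> (forall j, normc (f j) <= c * a j) ->
  \sum_j normc (X i j) * a j <= th * b i ->
  normc (\sum_j X i j * f j) <= c * (th * b i).
Proof.
move=> c0 hf hX; apply: le_trans (normc_sum_le _ _ _) _.
apply: le_trans (ler_wpM2l c0 hX); rewrite mulr_sumr ler_sum // => j _.
by rewrite Normc.normcM mulrCA ler_wpM2l ?normc_ge0.
Qed.

Lemma exists_weighted_bound (n : nat) (f : 'I_n -> C) (a : 'I_n -> R) :
  (forall i, 0 < a i) -> exists2 c, 0 <= c & forall i, normc (f i) <= c * a i.
Proof.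
move=> a_gt0; have q_ge0 i : 0 <= normc (f i) / a i by rewrite divr_ge0 ?normc_ge0 ?ltW.
exists (\sum_i normc (f i) / a i); first exact: sumr_ge0.
by move=> i; rewrite -ler_pdivrMr // (bigD1 i) //= lerDl sumr_ge0.
Qed.

Lemma contraction_fixpoint_eq0 (n : nat) (B : 'M[C]_n) (u : 'I_n -> R) (th : R) :
  0 <= th -> th < 1 -> (forall i, 0 < u i) ->
  (forall i, \sum_j normc (B i j) * u j <= th * u i) ->
  forall z : 'cV_n, B *m z = z -> z = 0.
Proof.
move=> th0 th1 u_gt0 hB z Bz.
have [c c0 hc] := exists_weighted_bound (fun i => z i 0) u_gt0.
have z_le t i : normc (z i 0) <= c * u i * th ^+ t.
  elim: t i => [|t IH] i; first by rewrite mulr1.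
  have -> : c * u i * th ^+ t.+1 = c * th ^+ t * (th * u i) by rewrite exprSr; ring.
  rewrite -Bz mxE; apply: normc_row_mul_le (hB i) => [|j].
    by rewrite mulr_ge0 ?exprn_ge0.
  by rewrite mulrAC.
apply/matrixP => i j; rewrite ord1 mxE; apply: Normc.eq0_normc.
apply/eqP; rewrite eq_le normc_ge0 andbT; apply/ler_addgt0Pr => e e0.
have hf t : exists K, forall k : nat, (K <= k)%N -> normc (z i 0) <= c * u i * th ^+ t.
  by exists 0%N => _ _; apply: z_le.
have [K hK] := eventually_lt_of_geometric th0 th1 hf e0.
by rewrite add0r ltW // (hK K).
Qed.

Section AsynchronousIteration.
Variables (n m : nat) (blk : 'I_n -> 'I_m).
Variables (G H : 'M[C]_n) (w v : 'I_n -> R) (th : R).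
Hypotheses (th_ge0 : 0 <= th) (th_lt1 : th < 1).
Hypotheses (w_gt0 : forall i, 0 < w i) (v_gt0 : forall i, 0 < v i).
Hypothesis G_contr : forall i, \sum_j normc (G i j) * v j <= th * w i.
Hypothesis H_contr : forall i, \sum_j normc (H i j) * w j <= th * v i.
Variables (Om : nat -> {set 'I_m}) (d : 'I_m -> 'I_m -> nat -> nat).
Hypothesis Om_inf : forall s K, exists k, (K <= k)%N /\ s \in Om k.
Hypothesis d_le : forall s q k, (d s q k <= k)%N.
Hypothesis d_unbounded : forall s q B, exists K, forall k, (K <= k)%N -> (B <= d s q k)%N.
Variables ex ey : nat -> 'I_n -> C.
Hypothesis ey_def : forall k i, ey k i = \sum_j G i j * ex (d (blk i) (blk j) k) j.
Hypothesis ex_def : forall k i,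
  ex k.+1 i = if blk i \in Om k then \sum_j H i j * ey (d (blk i) (blk j) k) j else ex k i.

Let bounded_from c K := forall k, (K <= k)%N -> forall i, normc (ex k i) <= c * v i.

Let contract_le c a : 0 <= c -> 0 < a -> c * (th * a) <= c * a.
Proof. by move=> c0 a0; rewrite ler_wpM2l // ler_piMl // ltW. Qed.

Lemma async_bounded0 : exists2 c, 0 <= c & bounded_from c 0.
Proof.
have [c c0 hc] := exists_weighted_bound (ex 0%N) v_gt0.
exists c => // k _; elim/ltn_ind: k => -[_ i|k IH i]; first exact: hc.
rewrite ex_def; case: ifP => _; last exact: IH.
apply: le_trans (normc_row_mul_le c0 _ (H_contr i)) (contract_le c0 (v_gt0 i)) => j.
rewrite ey_def; apply: le_trans (normc_row_mul_le c0 _ (G_contr j)) (contract_le c0 (w_gt0 j)).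
by move=> l; apply: IH; rewrite ltnS (leq_trans (d_le _ _ _)) ?d_le.
Qed.

Lemma async_delays_ge B : exists K, forall k, (K <= k)%N -> forall s q, (B <= d s q k)%N.
Proof.
have [K hK] := @eventually_forall _ (fun sq k => B <= d sq.1 sq.2 k)%N
  (fun sq => d_unbounded sq.1 sq.2 B).
by exists K => k /hK hk s q; apply: (hk (s, q)).
Qed.

Lemma async_updated_after K : exists K', forall k, (K' <= k)%N ->
  forall s, exists2 ks, (K <= ks < k)%N & s \in Om ks.
Proof.
apply: eventually_forall => s; have [ks [Kks hks]] := Om_inf s K.
by exists ks.+1 => k hk; exists ks; rewrite ?Kks.
Qed.

Lemma async_bounded_contract c K : 0 <= c -> bounded_from c K ->
  exists K', bounded_from (c * th ^+ 2) K'.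
Proof.
(* After K1 every y-error gains a factor th, after K2 so does every updated
   x-error, and after K3 every block has been updated since K2. *)
move=> c0 hK; have [K1 hK1] := async_delays_ge K.
have ey_le k j : (K1 <= k)%N -> normc (ey k j) <= c * (th * w j).
  by move=> hk; rewrite ey_def; apply: normc_row_mul_le c0 _ (G_contr j) => l; apply/hK/hK1.
have [K2 hK2] := async_delays_ge K1.
have upd_le k i : (K2 <= k)%N -> blk i \in Om k -> normc (ex k.+1 i) <= c * th ^+ 2 * v i.
  move=> hk hi; rewrite ex_def hi expr2 -mulrA -mulrA (mulrA c).
  apply: normc_row_mul_le (mulr_ge0 c0 th_ge0) _ (H_contr i) => j.
  by rewrite -mulrA; apply/ey_le/hK2.
have [K3 hK3] := async_updated_after K2.
exists K3 => k hk i; have [ks /andP[K2ks ksk] hks] := hK3 k hk (blk i).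
rewrite -(subnKC ksk); elim: (k - ks.+1)%N => [|t IH]; first by rewrite addn0 upd_le.
rewrite addnS ex_def; case: ifP => hi; last exact: IH.
have := upd_le (ks.+1 + t)%N i _ hi; rewrite ex_def hi; apply.
by apply: leq_trans K2ks _; rewrite addSnnS leq_addr.
Qed.

Lemma async_error_vanishing e : 0 < e ->
  exists K, forall k, (K <= k)%N -> forall i, normc (ex k i) < e.
Proof.
move=> e0; have [c c0 hc] := async_bounded0.
have bounded t : exists K, bounded_from (c * (th ^+ 2) ^+ t) K.
  elim: t => [|t [K hK]]; first by exists 0%N; rewrite expr0 mulr1.
  have [K' hK'] := async_bounded_contract (mulr_ge0 c0 (exprn_ge0 t (sqr_ge0 th))) hK.
  by exists K'; rewrite exprSr mulrA.
apply: eventually_forall => i.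
have hf t : exists K, forall k, (K <= k)%N -> normc (ex k i) <= c * v i * (th ^+ 2) ^+ t.
  by have [K hK] := bounded t; exists K => k /hK/(_ i); rewrite mulrAC.
have th2_lt1 : th ^+ 2 < 1 by rewrite exprn_ilt1.
by have [K hK] := eventually_lt_of_geometric (sqr_ge0 th) th2_lt1 hf e0; exists K.
Qed.

End AsynchronousIteration.

End Convergence.

Lemma unitmx_of_inj (F : fieldType) (n : nat) (A : 'M[F]_n) :
  (forall z : 'cV_n, A *m z = 0 -> z = 0) -> A \in unitmx.
Proof.
move=> A_inj; rewrite -unitmx_tr -row_free_unit; apply: inj_row_free => z zA0.
apply: trmx_inj; rewrite trmx0; apply: A_inj.
by rewrite -[A]trmxK -trmx_mul zA0 trmx0.
Qed.

Lemma mulmx_antidiag_fixpoint (F : pzRingType) (n : nat) (G H : 'M[F]_n) (z : 'cV_n) :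
  G *m z = z -> H *m z = z -> block_mx 0 G H 0 *m col_mx z z = col_mx z z.
Proof. by move=> Gz Hz; rewrite mul_block_col !mul0mx add0r addr0 Gz Hz. Qed.

Section Blocks.
(* sig1 i is the block containing the global index i, and sig2 i its position
   inside that block. *)
Import tagnat.
Variables (R : realType) (m : nat) (p : 'I_m -> nat).
Local Notation C := R[i].
Local Notation n := (\sum_(s < m) p s).

Lemma vblkE (x : 'cV[C]_n) s k : vblk x s k 0 = x (Rank s k) 0.
Proof. by rewrite /vblk /submxcol mxE. Qed.

Lemma vblk_eq_entry (x y : 'cV[C]_n) i :
  vblk x (sig1 i) = vblk y (sig1 i) -> x i 0 = y i 0.
Proof.
move=> /(congr1 (fun B : 'cV_(p (sig1 i)) => B (sig2 i) ord0)).
by rewrite !vblkE sig2K.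
Qed.

Lemma vblk_mulmx (A : 'M[C]_n) (x : 'cV[C]_n) s :
  vblk (A *m x) s = \sum_q mblk A s q *m vblk x q.
Proof.
by rewrite /vblk /mblk -{1}(submxblockK A) -{1}(submxcolK x) mul_mxblock_mxrow mxcolK.
Qed.

Lemma submxcol_mxdiag_mul c (D : forall s, 'M[C]_(p s)) (Y : 'M[C]_(n, c)) s :
  submxcol (\mxdiag_(s < m) D s *m Y) s = D s *m submxcol Y s.
Proof. by rewrite -{1}(submxcolK Y) mul_mxdiag_mxcol mxcolK. Qed.

Lemma invmx_mxdiag (D : forall s, 'M[C]_(p s)) : (forall s, D s \in unitmx) ->
  invmx (\mxdiag_(s < m) D s) = \mxdiag_(s < m) invmx (D s).
Proof.
move=> D_unit; have DinvD : \mxdiag_(s < m) invmx (D s) *m \mxdiag_(s < m) D s = 1%:M.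
  rewrite -[\mxdiag_(s < m) D s]mulmx1; apply/mxcolP => s.
  by rewrite !submxcol_mxdiag_mul mulKmx.
have [_ D_unitmx] := mulmx1_unit DinvD.
by rewrite -[invmx _]mul1mx -DinvD mulmxK.
Qed.

Lemma block_update_error (A : 'M[C]_n) (b xs : 'cV[C]_n) (D : forall s, 'M[C]_(p s))
    (z : 'I_m -> 'cV[C]_n) (t : 'cV[C]_n) (i : 'I_n) :
  (forall s, D s \in unitmx) -> A *m xs = b ->
  vblk t (sig1 i) = vblk (z (sig1 i)) (sig1 i) + invmx (D (sig1 i)) *m
     (vblk b (sig1 i) - \sum_q mblk A (sig1 i) q *m vblk (z q) q) ->
  t i 0 - xs i 0 = \sum_j (1%:M - invmx (\mxdiag_(s < m) D s) *m A) i j *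
                          (z (sig1 j) j 0 - xs j 0).
Proof.
move=> D_unit Axs; set s := sig1 i; set G := 1%:M - _ => ht.
pose X := \mxcol_(q < m) vblk (z q) q.
have : vblk t s = vblk (xs + G *m (X - xs)) s.
  have Xs : vblk (z s) s = vblk X s by rewrite /vblk mxcolK.
  have AX : \sum_q mblk A s q *m vblk (z q) q = vblk (A *m X) s.
    by rewrite vblk_mulmx; apply: eq_bigr => q _; rewrite /vblk mxcolK.
  have -> : xs + G *m (X - xs) = X + \mxdiag_(s < m) invmx (D s) *m (A *m xs - A *m X).
    rewrite -(invmx_mxdiag D_unit) /G mulmxBl mul1mx -mulmxBr mulmxA -[xs - X]opprB mulmxN.
    by rewrite addrA [xs + _]addrC subrK.
  rewrite ht Xs AX -Axs /vblk submxcolD submxcol_mxdiag_mul.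
  rewrite submxcolB; reflexivity.
move=> /vblk_eq_entry ->; rewrite !mxE [xs i 0 + _]addrC addrK.
by apply: eq_bigr => j _; rewrite !mxE sig2K.
Qed.

End Blocks.

Theorem theorem3 (R : realType) (m : nat) (p : 'I_m -> nat)
  (p_gt0 : forall s : 'I_m, (0 < p s)%N)
  (A : 'M[R[i]]_(\sum_(s < m) p s)) (b : 'cV[R[i]]_(\sum_(s < m) p s))
  (Mb Fb : forall s : 'I_m, 'M[R[i]]_(p s))
  (Mb_unit : forall s : 'I_m, Mb s \in unitmx)
  (Fb_unit : forall s : 'I_m, Fb s \in unitmx)
  (Omega : nat -> {set 'I_m})
  (delta : 'I_m -> 'I_m -> nat -> nat)
  (x y : nat -> 'cV[R[i]]_(\sum_(s < m) p s)) :
  let M := \mxdiag_(s < m) Mb s in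
  let F := \mxdiag_(s < m) Fb s in
  let Q := block_mx 0 (1%:M - invmx M *m A) (1%:M - invmx F *m A) 0 in
  spectral_radius (mx_abs Q) < 1 ->
  (forall (s : 'I_m) (K : nat), exists k : nat, (K <= k)%N /\ s \in Omega k) ->
  (forall (s q : 'I_m) (k : nat), (delta s q k <= k)%N) ->
  (forall (s q : 'I_m) (B : nat), exists K : nat,
      forall k : nat, (K <= k)%N -> (B <= delta s q k)%N) ->
  (forall (k : nat) (s : 'I_m),
      vblk (y k) s = vblk (x (delta s s k)) s
        + invmx (Mb s) *m (vblk b s
            - \sum_(q < m) mblk A s q *m vblk (x (delta s q k)) q)) ->
  (forall (k : nat) (s : 'I_m),
      vblk (x k.+1) s =
        if s \in Omega k then
          vblk (y (delta s s k)) s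
            + invmx (Fb s) *m (vblk b s
                - \sum_(q < m) mblk A s q *m vblk (y (delta s q k)) q)
        else vblk (x k) s) ->
  exists xs : 'cV[R[i]]_(\sum_(s < m) p s),
    [/\ A *m xs = b,
        (forall z : 'cV[R[i]]_(\sum_(s < m) p s), A *m z = b -> z = xs)
      & cvg_to x xs].
Proof.
move=> M F Q hQ Om_inf d_le d_unbounded hy hx.
have [u [th [th0 th1 u_gt0 hu]]] := weight_of_spectral_radius_lt1 hQ.
have [G_contr H_contr] := antidiag_weight_split hu.
have A_unit : A \in unitmx.
  apply: unitmx_of_inj => z Az0.
  have fix_z (B : 'M_(\sum_(s < m) p s)) : (1%:M - B *m A) *m z = z.
    by rewrite mulmxBl mul1mx -mulmxA Az0 mulmx0 subr0.
  have /eqP := contraction_fixpoint_eq0 th0 th1 u_gt0 hu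
    (mulmx_antidiag_fixpoint (fix_z _) (fix_z _)).
  by rewrite col_mx_eq0 => /andP[/eqP].
pose xs := invmx A *m b; have Axs : A *m xs = b by rewrite mulKVmx.
exists xs; split=> [//||]; first by move=> z Az; rewrite /xs -Az mulKmx.
apply: (async_error_vanishing th0 th1 (fun _ => u_gt0 _) (fun _ => u_gt0 _)
  G_contr H_contr Om_inf d_le d_unbounded (ex := fun k i => x k i 0 - xs i 0)
  (ey := fun k i => y k i 0 - xs i 0)) => k i.
  exact: block_update_error Mb_unit Axs (hy k _).
have := hx k (tagnat.sig1 i); case: ifP => _ hk; last by rewrite /= (vblk_eq_entry hk).
exact: block_update_error Fb_unit Axs hk.
Qed.
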